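(* Let $x_{k-1},x_k,x_{k+1}$ be consecutive Newton–Anderson iterates with $x_k,x_{k-1}\in B_{\hat r}(x^* )\setminus S$, under Assumption (A), and with $w_{k+1}\ne0$. Let $r^e_{k+1}$ and a minimizer $E_{k+1}$ be as in the context, and suppose $r^e_{k+1}<1$ and $$\|E_{k+1}\|\le \frac{\|P_Nw_{k+1}^{\alpha}\|}{1-r^e_{k+1}}.$$ Then $$\|P_Ne_{k+1}\|\le\Big(\frac{1+r^e_{k+1}}{1-r^e_{k+1}}\Big)\theta_{k+1}\|w_{k+1}\|.$$
   Context: $f:\mathbb{R}^n\to\mathbb{R}^n$ is $C^3$ with $f(x^* )=0$; norms are Euclidean; $N=\operatorname{null}f'(x^* )\neq\{0\}$, $R=\operatorname{range}f'(x^* )$, $\mathbb{R}^n=N\oplus R$, $P_N,P_R$ orthogonal projections; $S=\{x:\det f'(x)=0\}$. Iterates: $e_k=x_k-x^*$, $w_{k+1}=-f'(x_k)^{-1}f(x_k)$; Newton–Anderson: $x_1=x_0+w_1$, and for $k\ge1$, $\gamma_{k+1}=(w_{k+1}-w_k)^Tw_{k+1}/\|w_{k+1}-w_k\|^2$, $x_{k+1}=x_k+w_{k+1}-\gamma_{k+1}(x_k-x_{k-1}+w_{k+1}-w_k)$. $w^\alpha_{k+1}=(1-\gamma_{k+1})w_{k+1}+\gamma_{k+1}w_k$ and the optimization gain is $\theta_{k+1}=\|w^\alpha_{k+1}\|/\|w_{k+1}\|$. $\hat D(x):N\to N$, $v\mapsto P_Nf''(x^* )(x-x^*,v)$. Assumption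 (A): for $x\in B_{\hat r}(x^* )\setminus S$, $\hat D(x)$ is invertible on $N$, and $f'(x)^{-1}=\hat D(x)^{-1}P_N+\mathcal{O}(1)$ for $\|x-x^*\|<\hat r$. $T_kv=\tfrac12\hat D(x_k)^{-1}P_Nf''(x_k)(e_k,v)$. Set $q_{k-1}^k:=e_{k+1}-\tfrac12\big((1-\gamma_{k+1})P_Ne_k+\gamma_{k+1}P_Ne_{k-1}\big)-\big((1-\gamma_{k+1})T_kP_Re_k+\gamma_{k+1}T_{k-1}P_Re_{k-1}\big)$ and the vectors $a_1=\tfrac{1-\gamma_{k+1}}{2}P_Ne_k$, $a_2=\tfrac{\gamma_{k+1}}{2}P_Ne_{k-1}$, $a_3=(1-\gamma_{k+1})T_kP_Re_k$, $a_4=\gamma_{k+1}T_{k-1}P_Re_{k-1}$, $a_5=P_Nq_{k-1}^k$ (so $P_Ne_{k+1}=\sum_i a_i$). $S^e_{k+1}$ is the set of sums $\sum_{i\in I}a_i$ over nonempty proper subsets $I\subsetneq\{1,\dots,5\}$; $R^e_{k+1}=\{\|P_Ne_{k+1}-E\|/\|E\|:E\in S^e_{k+1},E\ne0\}$; $r^e_{k+1}=\min R^e_{k+1}$, and $E_{k+1}\in S^e_{k+1}$ is an element attaining this minimum. *)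

From HB Require Import structures.
From mathcomp Require Import all_boot all_order all_algebra.
From mathcomp Require Import all_classical all_reals all_analysis.
Set Implicit Arguments. Unset Strict Implicit. Unset Printing Implicit Defensive.
Import Order.TTheory GRing.Theory Num.Theory.
Import numFieldNormedType.Exports.
Local Open Scope ring_scope.
Local Open Scope classical_set_scope.

Section NewtonAnderson.
Variables (R : realType) (n : nat).
Local Notation vec := 'cV[R]_n.

Definition dotp (u v : vec) : R := \sum_i u i 0 * v i 0.
Definition enorm (v : vec) : R := Num.sqrt (dotp v v).

Definition evec (j : 'I_n) : vec := delta_mx j 0.

Definition dd (v : vec) (g : vec -> vec) : vec -> vec := fun x => 'D_v g x.

Definition C3 (f : vec -> vec) : Prop :=
  continuous f /\
  forall i j k : 'I_n,
   [/\ (forall x, derivable f x (evec i)) /\ continuous (dd (evec i) f),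
       (forall x, derivable (dd (evec i) f) x (evec j)) /\
         continuous (dd (evec j) (dd (evec i) f)) &
       (forall x, derivable (dd (evec j) (dd (evec i) f)) x (evec k)) /\
         continuous (dd (evec k) (dd (evec j) (dd (evec i) f)))].

Definition jac (f : vec -> vec) (x : vec) : 'M[R]_n :=
  \matrix_(i, j) dd (evec j) f x i 0.

Definition d2 (f : vec -> vec) (x u v : vec) : vec :=
  \sum_i \sum_j (u i 0 * v j 0) *: dd (evec j) (dd (evec i) f) x.

Definition nullsp (A : 'M[R]_n) : set vec := [set v | A *m v = 0].
Definition rangesp (A : 'M[R]_n) : set vec := [set v | exists u, v = A *m u].

Definition orth_proj (P : 'M[R]_n) (U : set vec) : Prop :=
  forall v, U (P *m v) /\ forall u, U u -> dotp (v - P *m v) u = 0.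

Definition sing (f : vec -> vec) : set vec := [set x | \det (jac f x) = 0].

Definition eball (c : vec) (r : R) : set vec := [set x | enorm (x - c) < r].

Definition newton (f : vec -> vec) (x : vec) : vec := - (invmx (jac f x) *m f x).

(* w_j := -f'(x_{j-1})^{-1} f(x_{j-1})  (meaningful for j >= 1) *)
Definition wN (f : vec -> vec) (x : nat -> vec) (j : nat) : vec :=
  newton f (x j.-1).

(* gammaN f x j = gamma_{j+1} (for j >= 1) *)
Definition gammaN (f : vec -> vec) (x : nat -> vec) (j : nat) : R :=
  dotp (wN f x j.+1 - wN f x j) (wN f x j.+1)
  / (enorm (wN f x j.+1 - wN f x j)) ^+ 2.

(* w^alpha_{j+1} *)
Definition walpha (f : vec -> vec) (x : nat -> vec) (j : nat) : vec :=
  (1 - gammaN f x j) *: wN f x j.+1 + gammaN f x j *: wN f x j.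

(* optimization gain theta_{j+1} *)
Definition thetaN (f : vec -> vec) (x : nat -> vec) (j : nat) : R :=
  enorm (walpha f x j) / enorm (wN f x j.+1).

(* x_0, ..., x_{k+1} are Newton-Anderson iterates (and are well defined:
   f'(x_j) is invertible for j <= k and w_{j+1} <> w_j for 1 <= j <= k) *)
Definition NA_iterates (f : vec -> vec) (x : nat -> vec) (k : nat) : Prop :=
  [/\ forall j, (j <= k)%N -> \det (jac f (x j)) != 0,
      forall j, (1 <= j <= k)%N -> wN f x j.+1 != wN f x j,
      x 1%N = x 0%N + wN f x 1%N &
      forall j, (1 <= j <= k)%N ->
        x j.+1 = x j + wN f x j.+1
                 - gammaN f x j *: (x j - x j.-1 + wN f x j.+1 - wN f x j)].

Definition Dhat (f : vec -> vec) (xs : vec) (PN : 'M[R]_n) (x v : vec) : vec :=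
  PN *m d2 f xs (x - xs) v.

(* \hat D(x)^{-1} y : the (unique, under Assumption (A)) v in N with \hat D(x) v = y *)
Definition Dhat_inv (f : vec -> vec) (xs : vec) (PN : 'M[R]_n) (x y : vec) : vec :=
  xget 0 [set v | nullsp (jac f xs) v /\ Dhat f xs PN x v = y].

Definition AssumptionA (f : vec -> vec) (xs : vec) (PN : 'M[R]_n) (rhat : R) : Prop :=
  let N := nullsp (jac f xs) in
  0 < rhat /\
  (forall x, eball xs rhat x -> ~ sing f x ->
      forall y, N y -> exists! v, N v /\ Dhat f xs PN x v = y) /\
  (exists C : R, forall x, eball xs rhat x -> ~ sing f x -> forall v,
      enorm (invmx (jac f x) *m v - Dhat_inv f xs PN x (PN *m v)) <= C * enorm v).

Definition Top (f : vec -> vec) (xs : vec) (PN : 'M[R]_n) (x : nat -> vec)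
  (j : nat) (v : vec) : vec :=
  (2%:R^-1 : R) *: Dhat_inv f xs PN (x j) (PN *m d2 f (x j) (x j - xs) v).

Definition qvec (f : vec -> vec) (xs : vec) (PN PR : 'M[R]_n) (x : nat -> vec)
  (k : nat) : vec :=
  let g := gammaN f x k in
  let e := fun j => x j - xs in
  e k.+1 - (2%:R^-1 : R) *: ((1 - g) *: (PN *m e k) + g *: (PN *m e k.-1))
  - ((1 - g) *: Top f xs PN x k (PR *m e k)
     + g *: Top f xs PN x k.-1 (PR *m e k.-1)).

(* the vectors a_1, ..., a_5 (indexed by 'I_5 as 0..4) *)
Definition avec (f : vec -> vec) (xs : vec) (PN PR : 'M[R]_n) (x : nat -> vec)
  (k : nat) (i : 'I_5) : vec :=
  let g := gammaN f x k in
  let e := fun j => x j - xs in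
  match val i with
  | 0 => ((1 - g) / 2%:R) *: (PN *m e k)
  | 1 => (g / 2%:R) *: (PN *m e k.-1)
  | 2 => (1 - g) *: Top f xs PN x k (PR *m e k)
  | 3 => g *: Top f xs PN x k.-1 (PR *m e k.-1)
  | _ => PN *m qvec f xs PN PR x k
  end.

Definition Se (f : vec -> vec) (xs : vec) (PN PR : 'M[R]_n) (x : nat -> vec)
  (k : nat) : set vec :=
  [set E | exists I : {set 'I_5}, [/\ I != finset.set0, I != [set: 'I_5]%SET &
           E = \sum_(i in I) avec f xs PN PR x k i]].

Definition ratioE (xs : vec) (PN : 'M[R]_n) (x : nat -> vec) (k : nat) (E : vec) : R :=
  enorm (PN *m (x k.+1 - xs) - E) / enorm E.

End NewtonAnderson.

From HB Require Import structures.
From mathcomp Require Import all_boot all_order all_algebra.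
From mathcomp Require Import all_classical all_reals all_analysis.
From mathcomp Require Import lra.
Set Implicit Arguments. Unset Strict Implicit. Unset Printing Implicit Defensive.
Import Order.TTheory GRing.Theory Num.Theory.
Import numFieldNormedType.Exports.
Local Open Scope ring_scope.
Local Open Scope classical_set_scope.

(* The bound is a triangle inequality through the minimizer E = E_{k+1}:
   ||P_N e_{k+1}|| <= ||P_N e_{k+1} - E|| + ||E|| = (1 + r) ||E||, and the
   hypothesis bounds ||E|| by ||P_N w^alpha|| / (1 - r).  Since P_N is an
   orthogonal projection, ||P_N w^alpha|| <= ||w^alpha|| = theta ||w||. *)

Section EuclideanNorm.
Variables (R : realType) (n : nat).
Implicit Types (u v w : 'cV[R]_n) (a : R).

Lemma dotpC u v : dotp u v = dotp v u.
Proof. by apply: eq_bigr => i _; rewrite mulrC. Qed.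

Lemma dotpDl u v w : dotp (u + v) w = dotp u w + dotp v w.
Proof. by rewrite /dotp -big_split; apply: eq_bigr => i _; rewrite !mxE mulrDl. Qed.

Lemma dotpZl a u v : dotp (a *: u) v = a * dotp u v.
Proof. by rewrite /dotp mulr_sumr; apply: eq_bigr => i _; rewrite !mxE mulrA. Qed.

Lemma dotpNl u v : dotp (- u) v = - dotp u v.
Proof. by rewrite -scaleN1r dotpZl mulN1r. Qed.

Lemma dotpDr u v w : dotp u (v + w) = dotp u v + dotp u w.
Proof. by rewrite dotpC dotpDl !(dotpC u). Qed.

Lemma dotpZr a u v : dotp u (a *: v) = a * dotp u v.
Proof. by rewrite dotpC dotpZl dotpC. Qed.

Lemma dotpNr u v : dotp u (- v) = - dotp u v.
Proof. by rewrite dotpC dotpNl dotpC. Qed.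

Lemma dotp0l v : dotp 0 v = 0.
Proof. by rewrite -(scale0r 0) dotpZl mul0r. Qed.

Lemma dotpp_ge0 v : 0 <= dotp v v.
Proof. by apply: sumr_ge0 => i _; rewrite -expr2 sqr_ge0. Qed.

Lemma dotpp_eq0 v : (dotp v v == 0) = (v == 0).
Proof.
apply/idP/eqP => [|->]; last by rewrite dotp0l.
rewrite psumr_eq0 => [/allP v0|i _]; last by rewrite -expr2 sqr_ge0.
apply/matrixP => i j; rewrite (ord1 j) mxE.
by apply/eqP; rewrite -sqrf_eq0 expr2; apply: v0; rewrite mem_index_enum.
Qed.

Lemma enorm_ge0 v : 0 <= enorm v.
Proof. exact: sqrtr_ge0. Qed.

Lemma sqr_enorm v : enorm v ^+ 2 = dotp v v.
Proof. by rewrite sqr_sqrtr // dotpp_ge0. Qed.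

Lemma enorm_eq0 v : (enorm v == 0) = (v == 0).
Proof. by rewrite -dotpp_eq0 -sqr_enorm sqrf_eq0. Qed.

Lemma enorm_gt0 v : (0 < enorm v) = (v != 0).
Proof. by rewrite lt0r enorm_ge0 andbT enorm_eq0. Qed.

Lemma enorm0 : enorm (0 : 'cV[R]_n) = 0.
Proof. by rewrite /enorm dotp0l sqrtr0. Qed.

Lemma cauchy_schwarz u v : dotp u v <= enorm u * enorm v.
Proof.
have [->|u0] := eqVneq u 0; first by rewrite dotp0l enorm0 mul0r.
have [->|v0] := eqVneq v 0; first by rewrite dotpC dotp0l enorm0 mulr0.
have := dotpp_ge0 (enorm v *: u - enorm u *: v).
rewrite !(dotpDl, dotpDr, dotpNl, dotpNr, dotpZl, dotpZr) (dotpC v u).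
rewrite -!sqr_enorm.
have uv_gt0 : 0 < enorm u * enorm v by rewrite mulr_gt0 ?enorm_gt0.
nra.
Qed.

Lemma ler_enormD u v : enorm (u + v) <= enorm u + enorm v.
Proof.
rewrite -ler_sqr ?nnegrE ?addr_ge0 ?enorm_ge0 // sqr_enorm.
rewrite !(dotpDl, dotpDr) (dotpC v u) sqrrD -!sqr_enorm.
by have := cauchy_schwarz u v; lra.
Qed.

Lemma enorm_pythagoras u v :
  dotp u v = 0 -> enorm (u + v) ^+ 2 = enorm u ^+ 2 + enorm v ^+ 2.
Proof.
by move=> uv0; rewrite !sqr_enorm !(dotpDl, dotpDr) (dotpC v u) uv0 addr0 add0r.
Qed.

Lemma enorm_orth_proj_le (P : 'M[R]_n) (U : set 'cV[R]_n) v :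
  orth_proj P U -> enorm (P *m v) <= enorm v.
Proof.
move=> /(_ v) [UPv orthP].
rewrite -ler_sqr ?nnegrE ?enorm_ge0 // -[X in _ <= enorm X ^+ 2](subrK (P *m v) v).
rewrite addrC enorm_pythagoras; last by rewrite dotpC orthP.
by rewrite lerDl sqr_ge0.
Qed.

Lemma enorm_le_through (p e : 'cV[R]_n) (b r : R) :
  e != 0 -> r = enorm (p - e) / enorm e -> r < 1 -> enorm e <= b / (1 - r) ->
  enorm p <= (1 + r) / (1 - r) * b.
Proof.
move=> e0 def_r r_lt1 e_le.
have e_gt0 : 0 < enorm e by rewrite enorm_gt0.
have r_ge0 : 0 <= r by rewrite def_r divr_ge0 ?enorm_ge0.
have dist_pe : enorm (p - e) = r * enorm e by rewrite def_r divfK ?gt_eqF.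
apply: le_trans (_ : enorm (p - e) + enorm e <= _).
  by rewrite -{1}(subrK e p) ler_enormD.
rewrite dist_pe -{2}(mul1r (enorm e)) -mulrDl mulrAC -mulrA addrC.
by rewrite ler_wpM2l ?addr_ge0.
Qed.

End EuclideanNorm.

Lemma thetaN_mul_enorm (R : realType) (n : nat) (f : 'cV[R]_n -> 'cV[R]_n)
    (x : nat -> 'cV[R]_n) (k : nat) :
  wN f x k.+1 != 0 -> thetaN f x k * enorm (wN f x k.+1) = enorm (walpha f x k).
Proof. by move=> w0; rewrite /thetaN divfK // enorm_eq0. Qed.

Theorem proposition4p2 (R : realType) (n : nat)
  (f : 'cV[R]_n -> 'cV[R]_n) (xs : 'cV[R]_n) (PN PR : 'M[R]_n) (rhat : R)
  (x : nat -> 'cV[R]_n) (k : nat) (r : R) (E : 'cV[R]_n) :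
  C3 f ->
  f xs = 0 ->
  (exists v, nullsp (jac f xs) v /\ v != 0) ->
  (forall v, exists a b, [/\ nullsp (jac f xs) a, rangesp (jac f xs) b & v = a + b]) ->
  (forall v, nullsp (jac f xs) v -> rangesp (jac f xs) v -> v = 0) ->
  orth_proj PN (nullsp (jac f xs)) ->
  orth_proj PR (rangesp (jac f xs)) ->
  AssumptionA f xs PN rhat ->
  (1 <= k)%N ->
  NA_iterates f x k ->
  eball xs rhat (x k) -> ~ sing f (x k) ->
  eball xs rhat (x k.-1) -> ~ sing f (x k.-1) ->
  wN f x k.+1 != 0 ->
  (* r = r^e_{k+1} = min R^e_{k+1}, attained at E = E_{k+1} *)
  Se f xs PN PR x k E -> E != 0 ->
  r = ratioE xs PN x k E ->
  (forall E', Se f xs PN PR x k E' -> E' != 0 -> r <= ratioE xs PN x k E') ->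
  r < 1 ->
  enorm E <= enorm (PN *m walpha f x k) / (1 - r) ->
  enorm (PN *m (x k.+1 - xs))
    <= (1 + r) / (1 - r) * thetaN f x k * enorm (wN f x k.+1).
Proof.
move=> _ _ _ _ _ PN_orth _ _ _ _ _ _ _ _ w0 _ E0 def_r _ r_lt1 E_le.
rewrite /ratioE in def_r.
have r_ge0 : 0 <= r by rewrite def_r divr_ge0 ?enorm_ge0.
have coef_ge0 : 0 <= (1 + r) / (1 - r).
  by rewrite divr_ge0 // ?subr_ge0 ?(ltW r_lt1) // addr_ge0.
apply: le_trans (enorm_le_through E0 def_r r_lt1 E_le) _.
rewrite -[X in _ <= X]mulrA thetaN_mul_enorm // ler_wpM2l //.
exact: enorm_orth_proj_le PN_orth.
Qed.
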